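(* Let $R=kQ/I$ be a string algebra with no DOZE. Then any two distinct bands of $(Q,I)$ (up to cyclic permutation and inversion) have at most one vertex in common.
   Context: A string algebra is $R=kQ/I$ with $I$ generated by paths, each vertex having at most two incoming and two outgoing arrows, and for each arrow $\alpha:x\to y$ at most one arrow $\beta$ from $y$ with $\alpha\beta\notin I$ and at most one arrow $\gamma$ into $x$ with $\gamma\alpha\notin I$ (paths composed left to right). A walk is a sequence of arrows and inverse arrows, reduced if no subwalk $\alpha\alpha^{-1}$ or $\alpha^{-1}\alpha$. A string is a reduced walk containing no zero-relation; a band is a cyclic string, not a power of another cyclic string, all of whose powers are strings. A double-zero is a reduced walk $\rho_1\nu\rho_2$ with $\rho_1,\rho_2$ zero-relations (paths in $I$) traversed along their arrows and $\nu$ a walk; a DOZE is a double-zero $\rho_1\omega_1\omega_2\omega_3\rho_2$ with $\omega_1,\omega_3$ walks and $\omega_2$ a band. *)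

From mathcomp Require Import all_boot.
Set Implicit Arguments. Unset Strict Implicit. Unset Printing Implicit Defensive.

(* A bound quiver (Q, I): vertices V, arrows A (finite types), source/target
   maps s t : A -> V, and I generated by the paths in [rels] (each a sequence
   of arrows, composed left to right). *)
Section StringCombinatorics.
Variables (V A : finType) (s t : A -> V) (rels : seq (seq A)).

Definition is_path (p : seq A) : bool := sorted (fun a b => t a == s b) p.

Definition inI (p : seq A) : bool := has (fun r => infix r p) rels.

Definition zero_rel (p : seq A) : Prop := p <> [::] /\ is_path p /\ inI p.

(* Standing hypotheses: I generated by paths of length >= 2, at most two
   incoming / outgoing arrows per vertex, and the two string conditions. *)
Definition string_algebra : Prop :=
  [/\ all (fun r => (1 < size r) && is_path r) rels,
      forall v : V, #|[set a : A | s a == v]| <= 2,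
      forall v : V, #|[set a : A | t a == v]| <= 2,
      forall al : A, #|[set be : A | (s be == t al) && ~~ inI [:: al; be]]| <= 1
    & forall al : A, #|[set ga : A | (t ga == s al) && ~~ inI [:: ga; al]]| <= 1].

(* letters: (a, true) is the arrow a, (a, false) its formal inverse *)
Definition letter := (A * bool)%type.
Definition lsrc (l : letter) : V := if l.2 then s l.1 else t l.1.
Definition ltgt (l : letter) : V := if l.2 then t l.1 else s l.1.

Definition is_walk (w : seq letter) : bool :=
  sorted (fun l1 l2 => ltgt l1 == lsrc l2) w.

Definition reduced (w : seq letter) : bool :=
  sorted (fun l1 l2 => ~~ ((l1.1 == l2.1) && (l1.2 != l2.2))) w.

Definition dir (p : seq A) : seq letter := [seq (a, true) | a <- p].
Definition inv_walk (w : seq letter) : seq letter :=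
  rev [seq (l.1, ~~ l.2) | l <- w].

Definition contains_zero (w : seq letter) : Prop :=
  exists u1 u u2 rho, w = u1 ++ u ++ u2 /\ zero_rel rho /\
    (u = dir rho \/ u = inv_walk (dir rho)).

Definition is_string (w : seq letter) : Prop :=
  is_walk w /\ reduced w /\ ~ contains_zero w.

Definition closed_walk (w : seq letter) : bool :=
  match w with
  | [::] => false
  | l :: _ => ltgt (last l w) == lsrc l
  end.

Definition wpow (w : seq letter) (n : nat) : seq letter := flatten (nseq n w).

Definition is_band (w : seq letter) : Prop :=
  [/\ w <> [::], closed_walk w,
      (forall n, 0 < n -> is_string (wpow w n))
    & ~ exists c m, 1 < m /\ w = wpow c m].

(* double-zero rho1 nu rho2 with rho1, rho2 zero-relations traversed along
   their arrows; DOZE: nu = om1 om2 om3 with om2 a band *)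
Definition is_DOZE (w : seq letter) : Prop :=
  exists rho1 om1 om2 om3 rho2,
    [/\ w = dir rho1 ++ om1 ++ om2 ++ om3 ++ dir rho2,
        zero_rel rho1, zero_rel rho2, is_band om2
      & is_walk w && reduced w].

Definition has_DOZE : Prop := exists w, is_DOZE w.

Definition verts (w : seq letter) : seq V := [seq lsrc l | l <- w].

Definition band_equiv (b1 b2 : seq letter) : Prop :=
  exists n, b2 = rot n b1 \/ b2 = rot n (inv_walk b1).

End StringCombinatorics.

From Pilot Require Import Defs.
From mathcomp Require Import all_boot zify.
Set Implicit Arguments. Unset Strict Implicit. Unset Printing Implicit Defensive.

(* Everything is reduced to one DOZE construction (doze_of_zero_pair): if two
   bands X, Y contain letters x, y leaving a common vertex and forming a
   length-two zero relation ("zero pair"), and contain distinct letters e, e'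
   entering a common vertex, then walking g b, around X, across from e to
   e'^-1, around Y^-1 and g b again is a DOZE.  The local structure of a
   string algebra at a vertex (at most two arrows in and out, string
   conditions) provides such zero pairs in two situations:
   - two bands through a common vertex sharing no letter (up to inversion)
     cross there: four distinct letters leave the vertex (doze_of_crossing);
   - two bands sharing a letter whose periodic words eventually differ first
     diverge after a common letter and later converge again (bands_agree).
   Hence bands sharing a letter agree as periodic words, so by primitivity
   one is a rotation of the other (rot_of_agree), and bands sharing a vertex
   are equivalent (common_vertex_equiv), from which the theorem follows. *)

Lemma period_gcd (T : Type) (W : nat -> T) m n : 0 < m ->
  (forall k, W (k + m) = W k) -> (forall k, W (k + n) = W k) ->
  forall k, W (k + gcdn m n) = W k.
Proof.
move=> Hm Wm Wn.
have iter p : (forall k, W (k + p) = W k) -> forall c k, W (k + c * p) = W k.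
  by move=> Wp; elim=> [|c IHc] k; rewrite ?addn0 // mulSn addnA IHc Wp.
have [a _ Ha] := Bezoutl n Hm.
by move=> k; rewrite -(iter n Wn a) -addnA -(divnK Ha) iter.
Qed.

Lemma bool_switch (P : pred nat) m n : m <= n -> P m -> ~~ P n ->
  exists2 i, m <= i < n & P i && ~~ P i.+1.
Proof.
elim: n => [|n IHn] Hmn Pm NPn.
  by move: Hmn NPn; rewrite leqn0 => /eqP Em; rewrite -Em Pm.
have {}Hmn : m <= n.
  by move: Hmn; rewrite leq_eqVlt ltnS => /orP [/eqP Em|//]; move: NPn; rewrite -Em Pm.
have [Pn|NPn'] := boolP (P n); first by exists n; [rewrite Hmn ltnSn | rewrite Pn NPn].
by have [i /andP [Hmi Hin] Hi] := IHn Hmn Pm NPn'; exists i; rewrite // Hmi ltnS ltnW.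
Qed.

Lemma map_uniq_inj (T U : eqType) (f : T -> U) (S : seq T) :
  uniq (map f S) -> {in S &, injective f}.
Proof.
move=> HU x y Hx Hy Exy; rewrite -(nth_index x Hx) -(nth_index x Hy); congr nth.
apply/eqP; rewrite -(nth_uniq (f x) _ _ HU) ?size_map ?index_mem //.
by rewrite !(nth_map x) ?index_mem // !nth_index // Exy.
Qed.

Lemma uniq_map_cat (T U : eqType) (f : T -> U) (s1 s2 : seq T) :
  uniq (map f s1) -> uniq (map f s2) -> {in s1 & s2, forall x y, f x != f y} ->
  uniq (map f (s1 ++ s2)).
Proof.
move=> U1 U2 D; rewrite map_cat cat_uniq U1 U2 andbT.
apply/hasPn => _ /mapP [y Hy ->]; apply/mapP => -[x Hx /eqP].
by rewrite eq_sym (negbTE (D x y Hx Hy)).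
Qed.

Section Bands.
Variables (V A : finType) (s t : A -> V) (rels : seq (seq A)).

Local Notation letter := (letter A).
Local Notation lsrc := (Defs.lsrc s t).
Local Notation ltgt := (Defs.ltgt s t).
Local Notation is_band := (Defs.is_band s t rels).
Local Notation has_DOZE := (Defs.has_DOZE s t rels).
Local Notation zero_rel := (Defs.zero_rel s t rels).
Local Notation inI := (Defs.inI rels).
Implicit Types (w b f h X Y : seq letter) (l e m x y : letter).

Definition linv (l : letter) : letter := (l.1, ~~ l.2).

Lemma linvK : involutive linv.
Proof. by case=> a b; rewrite /linv negbK. Qed.

Lemma linv_inj : injective linv. Proof. exact: inv_inj linvK. Qed.

Lemma lsrc_linv l : lsrc (linv l) = ltgt l. Proof. by case: l => a []. Qed.

Lemma ltgt_linv l : ltgt (linv l) = lsrc l. Proof. by case: l => a []. Qed.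

Lemma inv_walkE w : inv_walk w = rev (map linv w). Proof. by []. Qed.

Lemma inv_walkK : involutive (@inv_walk A).
Proof. by move=> w; rewrite !inv_walkE map_rev revK -map_comp (eq_map linvK) map_id. Qed.

Lemma inv_walk_cat w1 w2 : inv_walk (w1 ++ w2) = inv_walk w2 ++ inv_walk w1.
Proof. by rewrite !inv_walkE map_cat rev_cat. Qed.

Lemma inv_walk_cons l w : inv_walk (l :: w) = rcons (inv_walk w) (linv l).
Proof. by rewrite !inv_walkE /= rev_cons. Qed.

Lemma mem_inv_walk w l : (linv l \in inv_walk w) = (l \in w).
Proof. by rewrite inv_walkE mem_rev (mem_map linv_inj). Qed.

Lemma inv_rot w n : inv_walk (rot n w) = rot (size w - n) (inv_walk w).
Proof. by rewrite !inv_walkE map_rot rev_rot /rotr size_rev size_map. Qed.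

Lemma wpow2 w : wpow w 2 = w ++ w.
Proof. by rewrite /wpow /= cats0. Qed.

Lemma wpowS w n : wpow w n.+1 = w ++ wpow w n.
Proof. by []. Qed.

Lemma wpowSr w n : wpow w n.+1 = wpow w n ++ w.
Proof.
elim: n => [|n IHn]; first by rewrite /wpow /= cats0.
by rewrite [LHS]wpowS IHn catA -wpowS IHn.
Qed.

Lemma wpow_inv w n : wpow (inv_walk w) n = inv_walk (wpow w n).
Proof. by elim: n => [|n IHn] //; rewrite wpowS wpowSr inv_walk_cat IHn. Qed.

Lemma size_wpow w n : size (wpow w n) = n * size w.
Proof. by elim: n => [|n IHn] //; rewrite wpowS size_cat IHn mulSn. Qed.

Lemma nth_wpow x0 w n i :
  i < n * size w -> nth x0 (wpow w n) i = nth x0 w (i %% size w).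
Proof.
elim: n i => [|n IHn] i //; rewrite mulSn => Hi.
rewrite wpowS nth_cat; case: ltnP => H; first by rewrite modn_small.
rewrite IHn; last by rewrite -(ltn_add2l (size w)) subnKC.
by rewrite -{2}(subnKC H) modnDl.
Qed.

Definition reduced_step l m : bool :=
  (ltgt l == lsrc m) && ~~ ((l.1 == m.1) && (l.2 != m.2)).

Lemma reduced_step_neq l m : reduced_step l m -> m != linv l.
Proof. by case/andP=> _; apply: contraNneq => ->; rewrite /= eqxx /=; case: l => ? []. Qed.

Lemma sorted_reduced_step w : sorted reduced_step w = is_walk s t w && reduced w.
Proof. by rewrite -sorted_relI. Qed.

(* Every power of a band is a string, so its square is a reduced walk. *)
Lemma band_square b : is_band b -> sorted reduced_step (b ++ b).
Proof. by case=> _ _ /(_ 2 isT) [Hw [Hr _]] _; rewrite sorted_reduced_step -wpow2 Hw. Qed.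

(* [zero_pair x y]: x and y leave the same vertex with opposite orientations
   and the arrows g, b underlying the inverse letter and the direct letter
   compose to a zero relation g b. *)
Definition zero_pair x y : bool :=
  [&& lsrc x == lsrc y, x.2 != y.2 &
      inI (if y.2 then [:: x.1; y.1] else [:: y.1; x.1])].

Lemma zero_pairC x y : zero_pair x y = zero_pair y x.
Proof. by case: x y => [a []] [c []]; rewrite /zero_pair eq_sym. Qed.

Lemma zero_pair_walk e m : reduced_step e m -> zero_pair (linv e) m ->
  exists rho, zero_rel rho /\ ([:: e; m] = dir rho \/ [:: e; m] = inv_walk (dir rho)).
Proof.
case: e m => [a []] [c []];
  rewrite /zero_pair /reduced_step /lsrc /ltgt /= ?andbF // => /andP[/eqP E _] /andP[_ HI].
- exists [:: a; c]; split; last by left.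
  by split=> //; split=> //; rewrite /is_path /= E eqxx.
- exists [:: c; a]; split; last by right.
  by split=> //; split=> //; rewrite /is_path /= E eqxx.
Qed.

Definition consecutive b e m : Prop := exists s1 s2, b ++ b = s1 ++ e :: m :: s2.

Lemma band_consecutive b e m : is_band b -> consecutive b e m ->
  [/\ reduced_step e m, ~~ zero_pair (linv e) m, e \in b & m \in b].
Proof.
move=> Hb [s1 [s2 Eb]].
have inb x : x \in s1 ++ e :: m :: s2 -> x \in b by rewrite -Eb mem_cat orbb.
have Hem : reduced_step e m.
  by have := band_square Hb; rewrite Eb => /cat_sorted2[_] /= /andP[].
split=> //; try by apply: inb; rewrite mem_cat !inE eqxx ?orbT.
apply/negP => /(zero_pair_walk Hem) [rho [Zrho Erho]].
case: Hb => _ _ /(_ 2 isT) [_ [_ Hnz]] _; apply: Hnz.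
by exists s1, [:: e; m], s2, rho; rewrite wpow2 Eb.
Qed.

Lemma sorted_inv (r r' : rel letter) w :
  (forall x y, r x y -> r' (linv y) (linv x)) -> sorted r w -> sorted r' (inv_walk w).
Proof. by move=> H; rewrite inv_walkE rev_sorted sorted_map; apply: sub_sorted => x y /H. Qed.

Lemma string_inv w : is_string s t rels w -> is_string s t rels (inv_walk w).
Proof.
case=> Hw [Hr Hz]; split; [|split].
- by apply: sorted_inv Hw => x y /=; rewrite ltgt_linv lsrc_linv eq_sym.
- by apply: sorted_inv Hr => x y /=; rewrite eq_sym; case: (x.2); case: (y.2).
- case=> u1 [u [u2 [rho [E [Zrho Hu]]]]]; apply: Hz.
  exists (inv_walk u2), (inv_walk u), (inv_walk u1), rho; split.
    by rewrite -(inv_walkK w) E !inv_walk_cat catA.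
  by split=> //; case: Hu => ->; [right | left; rewrite inv_walkK].
Qed.

Lemma closed_inv w : closed_walk s t w -> closed_walk s t (inv_walk w).
Proof.
case: (lastP w) => [|c y] //.
have -> : inv_walk (rcons c y) = linv y :: inv_walk c.
  by rewrite inv_walkE map_rcons rev_rcons.
case: c => [|z c] /=; first by rewrite lsrc_linv ltgt_linv eq_sym.
by rewrite inv_walk_cons !last_rcons lsrc_linv ltgt_linv eq_sym.
Qed.

Lemma band_inv b : is_band b -> is_band (inv_walk b).
Proof.
case=> Hne Hc Hs Hp; split.
- by move=> E; apply: Hne; rewrite -(inv_walkK b) E.
- exact: closed_inv.
- by move=> n Hn; rewrite wpow_inv; apply: string_inv; apply: Hs.
- case=> c [n [Hn E]]; apply: Hp; exists (inv_walk c), n; split=> //.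
  by rewrite wpow_inv -E inv_walkK.
Qed.

Definition reach x y : Prop := exists p, path reduced_step x (rcons p y).

Lemma reach_step x y : reduced_step x y -> reach x y.
Proof. by move=> H; exists [::]; rewrite /= H. Qed.

Lemma reach_trans y x z : reach x y -> reach y z -> reach x z.
Proof.
case=> p Hp [q Hq]; exists (p ++ y :: q).
by rewrite rcons_cat rcons_cons -cat_rcons cat_path Hp last_rcons.
Qed.

(* Within a band one can walk from any letter to any other one, since the
   square of the band is a reduced walk. *)
Lemma band_reach b x y : is_band b -> x \in b -> y \in b -> reach x y.
Proof.
move=> Hb Hx Hy; set i := index x b; set j := index y b.
have Hi : i < size b by rewrite index_mem.
have Hj : j < size b by rewrite index_mem.
exists (drop i.+1 b ++ take j b).
rewrite -cats1 -catA cats1 -[y in rcons _ y](nth_index x Hy) -take_nth //.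
have Eb : b ++ b = take i b ++ (nth x b i :: (drop i.+1 b ++ take j.+1 b)) ++ drop j.+1 b.
  by rewrite -cat_cons -drop_nth // catA catA cat_take_drop -catA cat_take_drop.
by move: (band_square Hb); rewrite Eb nth_index // => /cat_sorted2 [_] /cat_sorted2 [].
Qed.

Lemma path_dir (a : A) r :
  path (fun a c => t a == s c) a r -> path reduced_step (a, true) (dir r).
Proof.
elim: r a => [|c r IHr] a //= /andP [Hac Hr].
by rewrite IHr // /reduced_step /ltgt /lsrc /= Hac andbF.
Qed.

(* A zero relation from which a band can be reached, and which can be
   reached again from the band, yields a DOZE: rho1, a walk to the last letter
   of the band, the band itself, a walk back to rho2, and rho2. *)
Lemma doze_of_reach r1 r2 b x0 :
  zero_rel r1 -> zero_rel r2 -> is_band b ->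
  reach (last x0 (dir r1)) (last x0 b) -> reach (last x0 b) (head x0 (dir r2)) ->
  has_DOZE.
Proof.
move=> Z1 Z2 Hb [p1 H1] [p3 H3].
have Hs := band_square Hb.
case: (Z1) (Z2) => Hne1 [Hp1 _] [Hne2 [Hp2 _]].
case: b Hb Hs H1 H3 => [[] //|x b] Hb Hs H1 H3.
case: r1 Z1 Hne1 Hp1 H1 => [//|a r1] Z1 _ Hp1 H1.
case: r2 Z2 Hne2 Hp2 H3 => [//|c r2] Z2 _ Hp2 H3.
set om1 := rcons p1 (last x b).
exists (dir (a :: r1) ++ om1 ++ (x :: b) ++ p3 ++ dir (c :: r2)).
exists (a :: r1), om1, (x :: b), p3, (c :: r2); split=> //.
rewrite -sorted_reduced_step /= cat_path path_dir //= cat_path H1 last_rcons /=.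
move: Hs; rewrite /= cat_path => /andP [_ /= /andP [-> Hb']].
rewrite cat_path Hb' /=.
move: H3; rewrite -cats1 cat_path => /andP [H3a /= /andP [H3b _]].
by rewrite cat_path H3a /= H3b /= path_dir.
Qed.

(* If a band X contains the arrow b and a band Y contains the arrow g, where
   g b is a zero relation, and some letter e of X may be followed by a letter
   m of Y, then g b, around X to e, across to m, around Y to g, g b is a DOZE. *)
Lemma doze_of_link X Y (g b : A) e m :
  zero_rel [:: g; b] -> is_band X -> is_band Y ->
  (b, true) \in X -> e \in X -> reduced_step e m -> m \in Y -> (g, true) \in Y ->
  has_DOZE.
Proof.
move=> Z HX HY Hb He Hem Hm Hg.
have Hl : last e X \in X by case: X HX He {Hb} => [//|z X] _ _ /=; apply: mem_last.
apply: (doze_of_reach (x0 := e) Z Z HX); first exact: band_reach HX Hb Hl.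
apply: reach_trans (band_reach HX Hl He) _.
exact: reach_trans (reach_step Hem) (band_reach HY Hm Hg).
Qed.

Lemma reduced_step_inv e e' : ltgt e = ltgt e' -> e != e' -> reduced_step e (linv e').
Proof.
move=> Ee; apply: contraNT; rewrite /reduced_step lsrc_linv Ee eqxx /= negbK.
case: e e' {Ee} => a x [c y] /andP [/= /eqP -> Hxy].
by rewrite xpair_eqE eqxx; case: x y Hxy => [] [].
Qed.

Lemma doze_of_zero_pair X Y x y e e' :
  is_band X -> is_band Y -> x \in X -> y \in Y -> zero_pair x y ->
  e \in X -> e' \in Y -> ltgt e = ltgt e' -> e != e' -> has_DOZE.
Proof.
wlog Hx2 : X Y x y e e' / x.2 => [Hwlog HX HY Hx Hy Hxy He He' Ee Hne|].
  case Ex: x.2; first by apply: (Hwlog X Y x y e e').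
  have Ey : y.2 by move: Hxy; rewrite /zero_pair Ex; case: (y.2); rewrite ?andbF.
  by apply: (Hwlog Y X y x e' e); rewrite // 1?zero_pairC 1?eq_sym.
case: x Hx2 => [b [] //] _; case: y => [g []]; first by rewrite /zero_pair andbF.
move=> HX HY Hb Hg /and3P [/eqP Egb _ HI] He He' Ee Hne.
have Z : zero_rel [:: g; b].
  split=> //; split; last exact: HI.
  by move: Egb; rewrite /is_path /lsrc /= => ->; rewrite eqxx.
apply: (doze_of_link Z HX (band_inv HY) Hb He (reduced_step_inv Ee Hne)).
  by rewrite mem_inv_walk.
by rewrite -[(g, true)]/(linv (g, false)) mem_inv_walk.
Qed.

Definition cyc x0 b k : letter := nth x0 b (k %% size b).

Lemma band_size b : is_band b -> 0 < size b.
Proof. by case; case: b. Qed.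

Lemma cyc_mem x0 b k : 0 < size b -> cyc x0 b k \in b.
Proof. by move=> H; rewrite /cyc mem_nth // ltn_pmod. Qed.

Lemma cyc_per x0 b k c : cyc x0 b (k + c * size b) = cyc x0 b k.
Proof. by rewrite /cyc addnC modnMDl. Qed.

Lemma cyc_small x0 b k : k < size b -> cyc x0 b k = nth x0 b k.
Proof. by move=> H; rewrite /cyc modn_small. Qed.

Lemma cyc_consecutive x0 b k : 0 < size b -> consecutive b (cyc x0 b k) (cyc x0 b k.+1).
Proof.
move=> Hn; set i := k %% size b.
have Hi : i < size b by rewrite ltn_pmod.
have nth2 j : j < (size b).*2 -> nth x0 (b ++ b) j = nth x0 b (j %% size b).
  move=> Hj; rewrite nth_cat; case: ltnP => H; first by rewrite modn_small.
  by rewrite -{2}(subnK H) modnDr modn_small //; lia.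
have Hi2 : i.+1 < size (b ++ b) by rewrite size_cat; lia.
exists (take i (b ++ b)), (drop i.+2 (b ++ b)).
rewrite /cyc -[k.+1]addn1 -modnDml -/i addn1 -(modn_small Hi) -!nth2 ?modn_mod; try lia.
by rewrite -(drop_nth x0 Hi2) -(drop_nth x0 (ltnW Hi2)) cat_take_drop.
Qed.

Lemma nth_rot x0 f r i :
  r <= size f -> i < size f -> nth x0 (rot r f) i = cyc x0 f (r + i).
Proof.
move=> Hr Hi; rewrite /rot /cyc nth_cat size_drop; case: ltnP => H.
  by rewrite nth_drop modn_small //; lia.
rewrite nth_take; last by lia.
by rewrite (_ : r + i = (i - (size f - r)) + size f) ?modnDr ?modn_small //; lia.
Qed.

Lemma band_period x0 f p d : is_band f -> 0 < d -> d %| size f ->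
  (forall k, cyc x0 f (p + (k + d)) = cyc x0 f (p + k)) -> size f = d.
Proof.
move=> Hb Hd Hdv H; have Hn := band_size Hb.
have per k : cyc x0 f (k + d) = cyc x0 f k.
  have Hp : p <= p * size f by rewrite leq_pmulr.
  rewrite -(cyc_per x0 f k p) -(cyc_per x0 f (k + d) p).
  rewrite (_ : k + p * size f = p + (k + p * size f - p)); last by lia.
  by rewrite (_ : k + d + p * size f = p + ((k + p * size f - p) + d)) ?H //; lia.
have iter c k : cyc x0 f (k + c * d) = cyc x0 f k.
  by elim: c k => [|c IHc] k; rewrite ?addn0 // mulSn addnA IHc per.
have Hdn : d <= size f by apply: dvdn_leq.
have Ef : f = wpow (take d f) (size f %/ d).
  apply: (@eq_from_nth _ x0); first by rewrite size_wpow size_takel // divnK.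
  move=> i Hi; rewrite nth_wpow size_takel ?divnK // nth_take ?ltn_pmod //.
  rewrite -(cyc_small x0 Hi) -(cyc_small x0 (leq_trans (ltn_pmod i Hd) Hdn)).
  by rewrite {1}(divn_eq i d) addnC iter.
case: Hb => _ _ _ Hprim.
have Hq : 0 < size f %/ d by rewrite divn_gt0.
case: (ltngtP (size f %/ d) 1) => Hc; first lia.
  by case: Hprim; exists (take d f), (size f %/ d).
by rewrite -(divnK Hdv) Hc mul1n.
Qed.

(* Two bands whose periodic words agree from some offsets on are rotations of
   each other: the common word has both lengths, hence their gcd, as periods,
   and primitivity forces both lengths to equal that gcd. *)
Lemma rot_of_agree x0 f h p q : is_band f -> is_band h ->
  (forall k, cyc x0 f (p + k) = cyc x0 h (q + k)) -> exists r, h = rot r f.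
Proof.
move=> Hf Hh Hag; have Hnf := band_size Hf; have Hnh := band_size Hh.
pose W k := cyc x0 f (p + k).
have Wf k : W (k + size f) = W k by rewrite /W addnA -[size f]mul1n cyc_per.
have Wh k : W (k + size h) = W k by rewrite /W !Hag addnA -[size h]mul1n cyc_per.
set d := gcdn (size f) (size h).
have Wd := period_gcd Hnf Wf Wh; rewrite -/d in Wd.
have Hd : 0 < d by rewrite gcdn_gt0 Hnf.
have Ef : size f = d by apply: (band_period Hf Hd (dvdn_gcdl _ _)); apply: Wd.
have Eh : size h = d.
  apply: (band_period (x0 := x0) (p := q) Hh Hd (dvdn_gcdr _ _)) => k.
  by rewrite -!Hag; apply: Wd.
exists ((p + (q * d - q)) %% d).
apply: (@eq_from_nth _ x0); first by rewrite size_rot Ef Eh.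
move=> i; rewrite Eh => Hi.
rewrite nth_rot; [|by rewrite Ef ltnW // ltn_pmod | by rewrite Ef].
rewrite -(cyc_small x0 (b := h) (k := i)) ?Eh // -(cyc_per x0 h i q) Eh.
have Hq : q <= q * d by rewrite leq_pmulr.
rewrite (_ : i + q * d = q + (i + q * d - q)); last by lia.
rewrite -Hag /cyc Ef modnDml.
by congr (nth _ _ (_ %% _)); lia.
Qed.

Section LocalStructure.
Hypothesis SA : string_algebra s t rels.

(* Letters of one orientation leaving a vertex u are determined by distinct
   arrows starting (resp. ending) at u, so there are at most two of them. *)
Lemma orientation_le2 (L : seq letter) u (o : bool) :
  uniq L -> all (fun x => (lsrc x == u) && (x.2 == o)) L -> size L <= 2.
Proof.
move=> HU /allP HL; case: SA => _ Hout Hin _ _.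
have inj : {in L &, injective (fun x : letter => x.1)}.
  by move=> [a p] [c q] /HL /andP [_ /eqP /= ->] /HL /andP [_ /eqP /= ->] /= ->.
rewrite -(size_map (fun x : letter => x.1)).
have /card_uniqP <- : uniq (map (fun x : letter => x.1) L) by rewrite (map_inj_in_uniq inj).
apply: leq_trans (_ : #|[set a | (if o then s a else t a) == u]| <= 2);
  last by case: (o); [apply: Hout | apply: Hin].
apply/subset_leq_card/subsetP => a /mapP [[c p] /HL /andP [/eqP Hu /eqP /= Ep] ->].
by rewrite inE -Hu /lsrc /= Ep.
Qed.

(* A letter z leaving the same vertex as two distinct letters x, y of the
   opposite orientation forms a zero pair with one of them: this is the
   string condition at the arrow of z. *)
Lemma zero_pair_of_opposite x y z :
  lsrc x = lsrc z -> lsrc y = lsrc z -> x != y -> x.2 = y.2 -> z.2 != x.2 ->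
  zero_pair z x || zero_pair z y.
Proof.
case: SA => _ _ _ Hsucc Hpred.
case: x y z => [a p] [c q] [g r] Ex Ey Hne /= Epq Er; subst q.
apply: contraNT Hne; rewrite negb_or /zero_pair Ex Ey eqxx /= => /andP [Ha Hc].
rewrite xpair_eqE eqxx andbT; apply/eqP.
move: Er Ex Ey Ha Hc; rewrite /lsrc /=; case: r; case: p => //= _ Ex Ey Ha Hc.
- by apply: (card_le1_eqP (Hpred g)); rewrite inE ?Ex ?Ey eqxx.
- by apply: (card_le1_eqP (Hsucc g)); rewrite inE ?Ex ?Ey eqxx.
Qed.

(* Indeed linv l, m, m' are distinct letters leaving one vertex. *)
Lemma zero_pair_of_divergence l m m' :
  reduced_step l m -> reduced_step l m' -> m != m' ->
  ~~ zero_pair (linv l) m -> ~~ zero_pair (linv l) m' -> zero_pair m m'.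
Proof.
move=> Hm Hm' Hne Zm Zm'; set z := linv l in Zm Zm' *.
have leave x : reduced_step l x -> lsrc x = lsrc z /\ x != z.
  by move=> Hx; split; [case/andP: Hx => /eqP <- _; rewrite lsrc_linv | exact: reduced_step_neq].
have [Em Hmz] := leave m Hm; have [Em' Hm'z] := leave m' Hm'.
clearbody z.
have [E2|N2] := eqVneq m.2 m'.2.
  have [Ezm|Nzm] := eqVneq z.2 m.2.
    suff : size [:: z; m; m'] <= 2 by [].
    apply: (orientation_le2 (u := lsrc z) (o := z.2)).
      by rewrite /= !inE !negb_or eq_sym Hmz eq_sym Hm'z Hne.
    by rewrite /= Em Em' -E2 Ezm !eqxx.
  by have := zero_pair_of_opposite Em Em' Hne E2 Nzm; rewrite (negbTE Zm) (negbTE Zm').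
have [Ezm|Nzm] := eqVneq z.2 m.2.
  have := @zero_pair_of_opposite z m m' (esym Em') (etrans Em (esym Em')).
  rewrite eq_sym Hmz Ezm eq_sym N2 => /(_ isT erefl isT).
  by rewrite zero_pairC (negbTE Zm') zero_pairC.
have Ezm' : z.2 = m'.2 by move: Nzm N2; case: (z.2); case: (m.2); case: (m'.2).
have := @zero_pair_of_opposite z m' m (esym Em) (etrans Em' (esym Em)).
rewrite eq_sym Hm'z Ezm' eq_sym -Ezm' Nzm => /(_ isT erefl isT).
by rewrite zero_pairC (negbTE Zm).
Qed.

(* Among four distinct letters leaving a vertex there are exactly two of each
   orientation, and the string conditions force a zero pair. *)
Lemma zero_pair_of_four (L : seq letter) u :
  uniq L -> size L = 4 -> all (fun x => lsrc x == u) L ->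
  exists x y, [/\ x \in L, y \in L & zero_pair x y].
Proof.
move=> HU HS /allP HL.
have le2 o : size [seq x <- L | x.2 == o] <= 2.
  apply: (orientation_le2 (u := u) (o := o)); first exact: filter_uniq.
  by apply/allP => x; rewrite mem_filter => /andP [-> /HL ->].
have Hsum : size [seq x <- L | x.2 == true] + size [seq x <- L | x.2 == false] = 4.
  rewrite !size_filter -HS -(count_predC (fun x : letter => x.2 == true)).
  by congr (_ + _); apply: eq_count => -[a []].
have inL x o : x \in [seq x <- L | x.2 == o] -> (x \in L) && (x.2 == o).
  by rewrite mem_filter andbC.
have [x [y ED]] : exists x y, [seq x <- L | x.2 == true] = [:: x; y].
  move: Hsum (le2 true) (le2 false) => /=.
  case: [seq x <- L | x.2 == true] => [|x [|y [|? ?]]] /=; try lia.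
  by exists x, y.
have [z Hz] : exists z, z \in [seq x <- L | x.2 == false].
  move: Hsum (le2 true); case: [seq x <- L | x.2 == false] => [|z ?] /=; first lia.
  by exists z; rewrite mem_head.
have /inL /andP [Hx /eqP Ex] : x \in [seq x <- L | x.2 == true] by rewrite ED mem_head.
have /inL /andP [Hy /eqP Ey] : y \in [seq x <- L | x.2 == true] by rewrite ED !inE eqxx orbT.
have /andP [Hxy _] : uniq [:: x; y] by rewrite -ED filter_uniq.
have /inL /andP [HzL /eqP Ez] := Hz.
have /orP [Hzx|Hzy] : zero_pair z x || zero_pair z y.
  apply: zero_pair_of_opposite; rewrite ?Ex ?Ey ?Ez //.
  - by rewrite (eqP (HL _ Hx)) (eqP (HL _ HzL)).
  - by rewrite (eqP (HL _ Hy)) (eqP (HL _ HzL)).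
  - by rewrite inE in Hxy.
- by exists z, x.
- by exists z, y.
Qed.

(* The two sides of a band passing a vertex between the consecutive letters
   l and m, one per direction of traversal: (entering letter, leaving letter). *)
Definition passage l m : seq (letter * letter) := [:: (l, m); (linv m, linv l)].

Definition on_band b x : bool := (x \in b) || (linv x \in b).

Lemma passage_spec b l m : is_band b -> consecutive b l m ->
  {in passage l m, forall P, [/\ exists2 X, is_band X & (P.1 \in X) && (P.2 \in X),
     ltgt P.1 = lsrc m, lsrc P.2 = lsrc m, on_band b P.1 & on_band b P.2]}.
Proof.
move=> Hb C; have [/andP [/eqP Elm _] _ Hl Hm] := band_consecutive Hb C.
move=> P; rewrite !inE => /orP [] /eqP -> /=.
  by split; rewrite /on_band ?Hl ?Hm //; exists b; rewrite ?Hl ?Hm.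
split; rewrite /on_band ?linvK ?Hl ?Hm ?orbT ?ltgt_linv ?lsrc_linv //.
by exists (inv_walk b); [exact: band_inv | rewrite !mem_inv_walk Hl Hm].
Qed.

Lemma passage_uniq l m : reduced_step l m ->
  uniq (map fst (passage l m)) && uniq (map snd (passage l m)).
Proof.
move=> /reduced_step_neq Hml; rewrite /= !inE !andbT Hml andbT.
by rewrite -(inj_eq linv_inj) linvK eq_sym.
Qed.

(* The four letters leaving the vertex contain a
   zero pair, and the letters entering it on the corresponding sides are
   distinct. *)
Lemma doze_of_crossing b1 b2 l1 m1 l2 m2 :
  is_band b1 -> is_band b2 -> consecutive b1 l1 m1 -> consecutive b2 l2 m2 ->
  lsrc m1 = lsrc m2 -> (forall x y, on_band b1 x -> on_band b2 y -> x != y) ->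
  has_DOZE.
Proof.
move=> H1 H2 C1 C2 Eu sep; set S := passage l1 m1 ++ passage l2 m2.
have spec P : P \in S -> [/\ exists2 X, is_band X & (P.1 \in X) && (P.2 \in X),
    ltgt P.1 = lsrc m1 & lsrc P.2 = lsrc m1].
  rewrite mem_cat => /orP [/(passage_spec H1 C1) | /(passage_spec H2 C2)] [HX He Hm _ _].
    by split.
  by rewrite Eu; split.
have cross : {in passage l1 m1 & passage l2 m2, forall P Q, (P.1 != Q.1) && (P.2 != Q.2)}.
  move=> P Q /(passage_spec H1 C1) [_ _ _ ? ?] /(passage_spec H2 C2) [_ _ _ ? ?].
  by rewrite !sep.
have [st1 _ _ _] := band_consecutive H1 C1; have [st2 _ _ _] := band_consecutive H2 C2.
case/andP: (passage_uniq st1) (passage_uniq st2) => [U1 U1'] /andP [U2 U2'].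
have Ufst : uniq (map fst S) by apply: uniq_map_cat => // P Q HP HQ; case/andP: (cross P Q HP HQ).
have Usnd : uniq (map snd S) by apply: uniq_map_cat => // P Q HP HQ; case/andP: (cross P Q HP HQ).
have [x [y [/mapP [P HP ->] /mapP [Q HQ ->] Hxy]]] : exists x y,
    [/\ x \in map snd S, y \in map snd S & zero_pair x y].
  apply: (zero_pair_of_four (u := lsrc m1) Usnd); first by rewrite size_map.
  by apply/allP => _ /mapP [P HP ->]; have [_ _ ->] := spec P HP.
have [[X HX /andP [HeX HmX]] EP _] := spec P HP.
have [[Y HY /andP [HeY HmY]] EQ _] := spec Q HQ.
apply: (doze_of_zero_pair HX HY HmX HmY Hxy HeX HeY (etrans EP (esym EQ))).
by apply: contraTneq Hxy => /(map_uniq_inj Ufst HP HQ) ->; rewrite /zero_pair !eqxx.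
Qed.

Section NoDOZE.
Hypothesis noDOZE : ~ has_DOZE.

(* Otherwise, within one common period, the periodic words first diverge
   after an agreeing letter (giving a zero pair) and later converge again
   (giving two distinct letters ending at a common vertex): a DOZE. *)
Lemma bands_agree x0 f h p q : is_band f -> is_band h ->
  cyc x0 f p = cyc x0 h q -> forall k, cyc x0 f (p + k) = cyc x0 h (q + k).
Proof.
move=> Hf Hh E0; have Hnf := band_size Hf; have Hnh := band_size Hh.
pose agree k := cyc x0 f (p + k) == cyc x0 h (q + k).
set N := size f * size h.
have HN : 0 < N by rewrite muln_gt0 Hnf.
have agreeN k c : agree (k + c * N) = agree k.
  have E1 : c * N = c * size h * size f by rewrite /N mulnCA mulnC.
  have E2 : c * N = c * size f * size h by rewrite /N mulnA.
  by rewrite /agree !addnA {1}E1 E2 !cyc_per.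
suff agree_lt k : k < N -> agree k.
  by move=> k; apply/eqP; rewrite -/(agree k) (divn_eq k N) addnC agreeN agree_lt ?ltn_pmod.
move=> HkN; apply/negPn/negP => Hk; apply: noDOZE.
have agree0 : agree 0 by rewrite /agree !addn0 E0.
have [i _ /andP [Ai NAi]] := bool_switch (leq0n k) agree0 Hk.
have [j _ /andP [NAj /negbNE Aj]] : exists2 j, k <= j < N & ~~ agree j && ~~ ~~ agree j.+1.
  apply: (@bool_switch (predC agree) k N (ltnW HkN)) => //.
  by rewrite /= negbK -[N]mul1n -[_ * _]add0n agreeN.
have [stF zF _ _] := band_consecutive Hf (cyc_consecutive x0 (p + i) Hnf).
have [stH zH _ _] := band_consecutive Hh (cyc_consecutive x0 (q + i) Hnh).
rewrite -!addnS (eqP Ai) in stF zF; rewrite -!addnS in stH zH.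
have Zp := zero_pair_of_divergence stF stH NAi zF zH.
have [cF _ HcF _] := band_consecutive Hf (cyc_consecutive x0 (p + j) Hnf).
have [cH _ HcH _] := band_consecutive Hh (cyc_consecutive x0 (q + j) Hnh).
rewrite -!addnS (eqP Aj) in cF; rewrite -!addnS in cH.
apply: (doze_of_zero_pair Hf Hh (cyc_mem _ _ Hnf) (cyc_mem _ _ Hnh) Zp HcF HcH _ NAj).
by case/andP: cF => /eqP ->; case/andP: cH => /eqP ->.
Qed.

Lemma rot_of_common_letter f h x : is_band f -> is_band h ->
  x \in f -> x \in h -> exists r, h = rot r f.
Proof.
move=> Hf Hh Hxf Hxh.
apply: (rot_of_agree (x0 := x) (p := index x f) (q := index x h) Hf Hh).
by apply: bands_agree => //; rewrite !cyc_small ?index_mem // !nth_index.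
Qed.

Lemma equiv_of_common_letter b1 b2 x : is_band b1 -> is_band b2 ->
  x \in b1 -> on_band b2 x -> band_equiv b1 b2.
Proof.
move=> H1 H2 Hx /orP [Hx2|Hx2].
  by have [r ->] := rot_of_common_letter H1 H2 Hx Hx2; exists r; left.
have Hx2' : x \in inv_walk b2 by rewrite -[x]linvK mem_inv_walk.
have [r Er] := rot_of_common_letter H1 (band_inv H2) Hx Hx2'.
by exists (size b1 - r); right; rewrite -inv_rot -Er inv_walkK.
Qed.

Lemma band_pred b m : is_band b -> m \in b -> exists l, consecutive b l m.
Proof.
move=> Hb Hm; have Hn := band_size Hb.
exists (cyc m b (index m b + size b).-1).
have := cyc_consecutive m (index m b + size b).-1 Hn.
rewrite prednK ?addn_gt0 ?Hn ?orbT //.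
by rewrite -[size b]mul1n cyc_per (@cyc_small m b (index m b)) ?index_mem // nth_index.
Qed.

(* Two bands through a common vertex are equivalent: either they share a
   letter up to inversion, or they cross at the vertex, giving a DOZE. *)
Lemma common_vertex_equiv b1 b2 u : is_band b1 -> is_band b2 ->
  u \in verts s t b1 -> u \in verts s t b2 -> band_equiv b1 b2.
Proof.
move=> H1 H2 /mapP [m1 Hm1 ->] /mapP [m2 Hm2 Eu].
have [[x Hx Hx2] | /hasPn Hno] := altP (@hasP _ (on_band b2) b1).
  exact: equiv_of_common_letter H1 H2 Hx Hx2.
have [l1 C1] := band_pred H1 Hm1; have [l2 C2] := band_pred H2 Hm2.
case: noDOZE; apply: (doze_of_crossing H1 H2 C1 C2 Eu) => x y Hx Hy.
apply: contraTneq Hy => <-; case/orP: Hx => [/Hno // | /Hno].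
by rewrite /on_band linvK orbC.
Qed.

End NoDOZE.

End LocalStructure.

End Bands.


Theorem lemma2p1 (V A : finType) (s t : A -> V) (rels : seq (seq A)) :
  string_algebra s t rels ->
  ~ has_DOZE s t rels ->
  forall b1 b2 : seq (A * bool),
    is_band s t rels b1 -> is_band s t rels b2 ->
    ~ band_equiv b1 b2 ->
    #|[set v : V | (v \in verts s t b1) && (v \in verts s t b2)]| <= 1.
Proof.
move=> SA noDOZE b1 b2 H1 H2 notEquiv.
suff -> : [set v : V | (v \in verts s t b1) && (v \in verts s t b2)] = set0 by rewrite cards0.
apply/setP => v; rewrite !inE; apply/negP => /andP [Hv1 Hv2].
exact: notEquiv (common_vertex_equiv SA noDOZE H1 H2 Hv1 Hv2).
Qed.
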